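(* Let $\alpha=(\alpha_1,\dots,\alpha_s)\in\mathbb{K}_s$ and $1\le i\le s$. If $\alpha^i$ is symmetric, then $\alpha^j$ is non-symmetric for every $1\le j\le s$ with $j\neq i$.
   Context: $\mathbb{K}_s=\{(\alpha_1,\dots,\alpha_s)\in\mathbb{Z}^s:\ \alpha_k\alpha_{k+1}<0 \text{ for all } 1\le k\le s-1\}$, with all entries nonzero. For $\beta=(\beta_1,\dots,\beta_s)\in\mathbb{Z}^s$, $-\beta=(-\beta_1,\dots,-\beta_s)$ and $\overline{\beta}=(\beta_s,\dots,\beta_1)$; $\beta$ is symmetric if $\beta=-\overline{\beta}$ (as tuples). For $1\le i\le s$, $\alpha^i=(\alpha_1,\dots,\alpha_{i-1},\alpha_i*1,\alpha_{i+1},\dots,\alpha_s)$, where $\alpha_i*1=\alpha_i-1$ if $\alpha_i>0$ and $\alpha_i*1=\alpha_i+1$ otherwise. *)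

From mathcomp Require Import all_boot all_order all_algebra.
Set Implicit Arguments. Unset Strict Implicit. Unset Printing Implicit Defensive.
Import Order.TTheory GRing.Theory Num.Theory.
Local Open Scope ring_scope.

(* K_s: integer tuples of length s, all entries nonzero, consecutive entries of
   opposite sign (alpha_k * alpha_{k+1} < 0). Sequences are 0-indexed. *)
Definition inK (s : nat) (alpha : seq int) : bool :=
  (size alpha == s) &&
  all (fun x => x != 0) alpha &&
  [forall k : 'I_s, (k.+1 < s)%N ==> (alpha`_k * alpha`_k.+1 < 0)].

Definition negseq (beta : seq int) : seq int := map (fun x => - x) beta.

Definition symmetric_seq (beta : seq int) : bool := beta == negseq (rev beta).

Definition star1 (a : int) : int := if 0 < a then a - 1 else a + 1.

Definition alpha_up (alpha : seq int) (i : nat) : seq int :=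
  set_nth 0 alpha i (star1 alpha`_i).

From mathcomp Require Import all_boot all_order all_algebra.
From mathcomp Require Import zify.
Local Open Scope ring_scope.

(* Read both symmetry conditions at position i, whose mirror is i' = s-1-i.
   If i' = i, symmetry of alpha^j forces alpha_i = 0.  If i' = j, we get
   alpha_i * 1 = -alpha_j and alpha_i = -(alpha_j * 1), which no two nonzero
   integers satisfy.  Otherwise alpha_i * 1 = -alpha_i' = alpha_i, but * 1
   has no fixed point.  Only the nonvanishing of the entries is needed, not
   the alternation of signs. *)

Lemma star1_neq (a : int) : star1 a != a.
Proof. by rewrite /star1; case: ifP => _; lia. Qed.

Lemma star1_opp_swap (a b : int) :
  a != 0 -> b != 0 -> star1 a = - b -> a != - star1 b.
Proof. by rewrite /star1; case: ifP; case: ifP; lia. Qed.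

Lemma size_alpha_up (alpha : seq int) n :
  (n < size alpha)%N -> size (alpha_up alpha n) = size alpha.
Proof. by move=> lt_n; rewrite size_set_nth; apply/maxn_idPr. Qed.

Lemma nth_alpha_up (alpha : seq int) n m :
  (alpha_up alpha n)`_m = if m == n then star1 alpha`_n else alpha`_m.
Proof. exact: nth_set_nth. Qed.

Lemma symmetric_nth {b : seq int} :
  symmetric_seq b -> forall k, (k < size b)%N -> b`_k = - b`_(size b - k.+1).
Proof.
by move=> /eqP symb k lt_k; rewrite {1}symb (nth_map 0) ?size_rev // nth_rev.
Qed.

Theorem lemma2 (s : nat) (alpha : seq int) (i : nat) :
  inK s alpha -> (i < s)%N -> symmetric_seq (alpha_up alpha i) ->
  forall j : nat, (j < s)%N -> j <> i -> ~~ symmetric_seq (alpha_up alpha j).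
Proof.
move=> /andP[/andP[/eqP size_alpha nz_alpha] _] lt_i sym_i j lt_j /nesym/eqP neq_ij.
apply/negP => sym_j.
have nz k : (k < s)%N -> alpha`_k != 0.
  by move=> lt_k; apply: (allP nz_alpha); rewrite mem_nth ?size_alpha.
have := symmetric_nth sym_i; have := symmetric_nth sym_j.
rewrite !size_alpha_up ?size_alpha // => /(_ i lt_i) Ej /(_ i lt_i) Ei.
rewrite !nth_alpha_up eqxx in Ei; rewrite !nth_alpha_up (negbTE neq_ij) in Ej.
have lt_i' : (s - i.+1 < s)%N by lia.
case: (eqVneq (s - i.+1)%N i) => [eq_i'i | neq_i'i].
  by move: Ej; rewrite eq_i'i (negbTE neq_ij); move/eqP: (nz i lt_i); lia.
rewrite (negbTE neq_i'i) in Ei.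
case: (eqVneq (s - i.+1)%N j) => [eq_i'j | neq_i'j].
  move: Ej; rewrite eq_i'j eqxx -eq_i'j.
  by apply/eqP/star1_opp_swap; rewrite ?nz.
rewrite (negbTE neq_i'j) in Ej.
by move: (star1_neq alpha`_i); rewrite Ei Ej eqxx.
Qed.
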